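(* Let $\mathcal F$ be an infinite family of closed convex sets in $\mathbb R^d$ satisfying the $(d+1,d+1)$-property and such that $\bigcap_{A\in\mathcal F}A=\emptyset$. Then there is a unit vector $v\in\mathbb R^d$ such that for every $A\in\mathcal F$ and every $a\in A$ we have $\{a+tv : t\ge0\}\subseteq A$.
   Context: The $(d+1,d+1)$-property means that every $d+1$ members of the family have a common point. *)

From Stdlib Require Import Reals List.
From mathcomp Require Import all_boot.
Set Implicit Arguments.
Unset Strict Implicit.
Unset Printing Implicit Defensive.

Definition point (d : nat) := 'I_d -> R.

Definition vadd d (x y : point d) : point d := fun i => Rplus (x i) (y i).
Definition vscale d (t : R) (x : point d) : point d := fun i => Rmult t (x i).

Definition sqnorm d (x : point d) : R := \big[Rplus/R0]_(i : 'I_d) Rmult (x i) (x i).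
Definition dist d (x y : point d) : R := sqrt (sqnorm (fun i => Rminus (x i) (y i))).

Definition is_convex d (A : point d -> Prop) : Prop :=
  forall x y (t : R), A x -> A y -> Rle 0 t /\ Rle t 1 ->
    A (vadd (vscale t x) (vscale (Rminus 1 t) y)).

Definition is_closed d (A : point d -> Prop) : Prop :=
  forall x, (forall eps : R, Rlt 0 eps -> exists a, A a /\ Rlt (dist x a) eps) -> A x.

Definition setfamily d := (point d -> Prop) -> Prop.

Definition infinite_family d (F : setfamily d) : Prop :=
  forall l : list (point d -> Prop), exists A, F A /\ ~ In A l.

Definition kk_property d (k : nat) (F : setfamily d) : Prop :=
  forall l : list (point d -> Prop), List.length l = k -> NoDup l ->
    (forall A, In A l -> F A) -> exists x, forall A, In A l -> A x.

From Pilot Require Import Defs.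
From Stdlib Require Import Reals List Lra Lia.
From Stdlib Require Import Classical ClassicalEpsilon FunctionalExtensionality.
From mathcomp Require Import all_boot all_algebra Rstruct.

(* Padding with further members of the infinite family, the (d+1,d+1)-property says that any
   at most d+1 members meet, so by Helly's theorem (via Radon's theorem) every finite subfamily
   has a common point.  Since the whole family has none, compactness of cubes forces every finite
   intersection K to be unbounded; a nonempty unbounded closed convex set contains a ray p + t u
   with |u| = 1, and then u is a recession direction of every closed convex set containing K.
   For each member, its unit recession directions form a closed subset of the unit sphere; these
   sets have the finite intersection property, so by compactness they share a vector v. *)

Set Implicit Arguments.
Unset Strict Implicit.
Unset Printing Implicit Defensive.
Open Scope R_scope.

Lemma cv_const c : Un_cv (fun _ => c) c.
Proof. by move=> eps He; exists 0%nat => n _; rewrite /R_dist Rminus_diag Rabs_R0. Qed.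

Lemma cv_scal (u : nat -> R) l c : Un_cv u l -> Un_cv (fun n => c * u n) (c * l).
Proof. exact: CV_mult (cv_const c). Qed.

Lemma cv_squeeze (u w : nat -> R) l :
  (forall n, Rabs (u n - l) <= w n) -> Un_cv w 0 -> Un_cv u l.
Proof.
move=> Huw Hw eps He; have [N HN] := Hw eps He; exists N => n Hn.
have := HN n Hn; rewrite /R_dist Rminus_0_r; have := Huw n; have := Rle_abs (w n); lra.
Qed.

Lemma cv_inv_succ : Un_cv (fun n => / (INR n + 1)) 0.
Proof. exact: Un_cv_ext RinvN_cv. Qed.

Lemma big_Rplus_ge0 (I : Type) (r : seq I) (P : pred I) (F : I -> R) :
  (forall i, 0 <= F i) -> 0 <= \big[Rplus/R0]_(i <- r | P i) F i.
Proof. by move=> F0; apply: (big_ind (fun s => 0 <= s)) => //; [lra | move=> a b; lra]. Qed.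

Lemma big_Rplus_ge_term (I : finType) (F : I -> R) k :
  (forall i, 0 <= F i) -> F k <= \big[Rplus/R0]_i F i.
Proof.
move=> F0; rewrite (bigD1 k) //=.
have := @big_Rplus_ge0 _ (index_enum I) (fun i => i != k) F F0; lra.
Qed.

Lemma big_Rplus_le_size (I : Type) (r : seq I) (F : I -> R) c :
  (forall i, F i <= c) -> \big[Rplus/R0]_(i <- r) F i <= INR (size r) * c.
Proof.
move=> Fc; elim: r => [|a r IH]; first by rewrite big_nil /=; lra.
by rewrite big_cons [size _]/= S_INR; have := Fc a; lra.
Qed.

Lemma sqnorm_ge0 d (x : point d) : 0 <= sqnorm x.
Proof. by apply: big_Rplus_ge0 => i; nra. Qed.

Lemma coord_sq_le_sqnorm d (x : point d) i : x i * x i <= sqnorm x.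
Proof. by apply: (big_Rplus_ge_term (F := fun j => x j * x j)) => j; nra. Qed.

Lemma unit_coord_bound d (u : point d) k : sqnorm u = 1 -> -1 <= u k <= 1.
Proof. by move=> u1; have := coord_sq_le_sqnorm u k; rewrite u1; split; nra. Qed.

Lemma coord_le_dist d (x y : point d) i : Rabs (x i - y i) <= Defs.dist x y.
Proof.
rewrite /Defs.dist -sqrt_Rsqr_abs; apply: sqrt_le_1_alt.
exact: (coord_sq_le_sqnorm (fun i => x i - y i) i).
Qed.

Lemma dist_le_coord_bound d (x y : point d) e : 0 <= e ->
  (forall i, Rabs (x i - y i) <= e) -> Defs.dist x y <= (INR d + 1) * e.
Proof.
move=> e0 Hxy; have d0 := pos_INR d.
rewrite /Defs.dist -(sqrt_Rsqr ((INR d + 1) * e)); last by nra.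
apply: sqrt_le_1_alt; rewrite /sqnorm.
have sq_le i : (x i - y i) * (x i - y i) <= e * e.
  have := Hxy i; have := Rabs_pos (x i - y i).
  by rewrite -[(x i - y i) * _]/(Rsqr _) Rsqr_abs /Rsqr; nra.
rewrite -big_enum; apply: Rle_trans (big_Rplus_le_size _ sq_le) _.
by rewrite size_enum_ord /Rsqr; nra.
Qed.

Definition coord_cv d (a : nat -> point d) (x : point d) :=
  forall i, Un_cv (fun n => a n i) (x i).

Definition seq_closed d (A : point d -> Prop) :=
  forall a x, (forall n, A (a n)) -> coord_cv a x -> A x.

Lemma coord_cv_unif d (a : nat -> point d) x eps : coord_cv a x -> 0 < eps ->
  exists N, forall n i, (N <= n)%N -> Rabs (a n i - x i) < eps.
Proof.
move=> ax e0.
have [N HN] : exists N : 'I_d -> nat, forall i n, (n >= N i)%coq_nat -> R_dist (a n i) (x i) < eps.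
  by apply: (choice (fun i N => forall n, (n >= N)%coq_nat -> R_dist (a n i) (x i) < eps)) => i; exact: ax.
exists (\max_i N i)%N => n i Hn; apply: HN; apply/leP.
exact: leq_trans (leq_bigmax i) Hn.
Qed.

Lemma is_closed_seq_closed d (A : point d -> Prop) : is_closed A -> seq_closed A.
Proof.
move=> clA a x Aa ax; apply: clA => eps e0; have d0 := pos_INR d.
have e'0 : 0 < eps / (2 * (INR d + 1)) by apply: Rdiv_lt_0_compat; lra.
have [N HN] := coord_cv_unif ax e'0.
exists (a N); split => //.
apply: Rle_lt_trans (dist_le_coord_bound (y := a N) (Rlt_le _ _ e'0) _) _.
  by move=> i; rewrite Rabs_minus_sym; apply: Rlt_le; apply: HN.
have -> : (INR d + 1) * (eps / (2 * (INR d + 1))) = eps / 2 by field; lra.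
lra.
Qed.

Lemma seq_closedI d (A B : point d -> Prop) :
  seq_closed A -> seq_closed B -> seq_closed (fun x => A x /\ B x).
Proof. by move=> clA clB a x ABa ax; split; [apply: clA ax | apply: clB ax] => n; case: (ABa n). Qed.

Lemma seq_closed_if d (P : Prop) (A : point d -> Prop) :
  (P -> seq_closed A) -> seq_closed (fun x => P -> A x).
Proof. by move=> clA a x Aa ax HP; apply: (clA HP) ax => n; exact: Aa. Qed.

Lemma seq_closed_affine_preim d (A : point d -> Prop) p c :
  seq_closed A -> seq_closed (fun u => A (vadd p (vscale c u))).
Proof.
move=> clA a u Aa au; apply: (clA _ _ Aa) => i.
exact: CV_plus (cv_const _) (cv_scal _ (au i)).
Qed.

Lemma sphere_seq_closed d : seq_closed (fun u : point d => sqnorm u = 1).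
Proof.
move=> a u a1 au; apply: (@UL_sequence (fun n => sqnorm (a n))); last first.
  by apply: Un_cv_ext (cv_const 1) => n; rewrite a1.
rewrite /sqnorm; elim: (index_enum _) => [|k s IH].
  by rewrite big_nil; apply: Un_cv_ext (cv_const 0) => n; rewrite big_nil.
rewrite big_cons; apply: Un_cv_ext (CV_plus _ _ _ _ (CV_mult _ _ _ _ (au k) (au k)) IH) => n.
by rewrite big_cons.
Qed.

Lemma InP (T : eqType) (x : T) (s : seq T) : reflect (In x s) (x \in s).
Proof.
elim: s => [|a s IH]; first by constructor.
by rewrite in_cons; apply: (iffP orP) => [[/eqP -> | /IH] | [-> | /IH]]; [left | right | left | right].
Qed.

Lemma nested_intervals (a w : nat -> R) :
  (forall n, 0 <= w n) -> (forall n, a n <= a n.+1) ->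
  (forall n, a n.+1 + w n.+1 <= a n + w n) ->
  exists x, forall n, a n <= x <= a n + w n.
Proof.
move=> w0 a_up b_down.
have a_grow : Un_growing a by exact: a_up.
have a_le_b m n : a m <= a n + w n.
  case: (leqP m n) => [/leP mn | /ltnW/leP nm].
    by have := @growing_prop a n m a_grow mn; have := w0 n; lra.
  by have := @decreasing_prop (fun n => a n + w n) n m b_down nm; have := w0 m; lra.
have [x ax] : {x | Un_cv a x}.
  by apply: growing_cv a_grow _; exists (a 0%N + w 0%N) => _ [n ->]; exact: a_le_b.
exists x => n; split; first exact: growing_ineq a_grow ax n.
exact: Rle_cv_lim (fun m => a_le_b m n) ax (cv_const _).
Qed.

Definition in_box d (lo : point d) (w : R) (x : point d) :=
  forall k, lo k <= x k <= lo k + w.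

Section CubeCompactness.
Variables (d : nat) (I : Type) (f : I -> point d -> Prop).

Definition box_fip lo w :=
  forall l : list I, exists x, in_box lo w x /\ forall i, In i l -> f i x.

Lemma box_fip_half lo w : 0 <= w -> box_fip lo w ->
  exists lo', box_fip lo' (w / 2) /\ forall k, lo k <= lo' k <= lo k + w / 2.
Proof.
move=> w0 fip; apply: NNPP => none.
(* The [2 ^ d] half-size boxes cover the box: if each of them missed a finite subfamily, the
   concatenation of these subfamilies would have no point in the box. *)
pose half (s : {ffun 'I_d -> bool}) k := lo k + (if s k then w / 2 else 0).
have bad s : exists l, forall x, in_box (half s) (w / 2) x -> ~ (forall i, In i l -> f i x).
  apply: NNPP => good; apply: none; exists (half s); split; last first.
    by move=> k; rewrite /half; case: (s k); lra.
  move=> l; apply: NNPP => nol; apply: good; exists l => x Hx Hl; apply: nol.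
  by exists x.
have [L HL] := choice _ bad.
have [x [xbox xL]] := fip (flat_map L (enum {ffun 'I_d -> bool})).
pose s := [ffun k => if Rle_dec (lo k + w / 2) (x k) then true else false].
apply: (HL s x).
  by move=> k; rewrite /half ffunE; have := xbox k; case: Rle_dec => /= ?; lra.
move=> i Hi; apply: xL; apply/in_flat_map; exists s; split => //.
by apply/InP; rewrite mem_enum.
Qed.

Lemma box_fip_limit lo0 w : 0 <= w -> box_fip lo0 w ->
  exists (lo : nat -> point d) (x : point d),
    forall n, box_fip (lo n) (w / 2 ^ n) /\ in_box (lo n) (w / 2 ^ n) x.
Proof.
move=> w0 fip0; pose W n := w / 2 ^ n.
have W0 n : 0 <= W n.
  by apply: Rmult_le_pos => //; apply: Rlt_le; apply: Rinv_0_lt_compat; apply: pow_lt; lra.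
have WS n : W n.+1 = W n / 2 by rewrite /W /=; field; apply: pow_nonzero; lra.
have [next Hnext] : exists next : point d * R -> point d, forall p, 0 <= p.2 -> box_fip p.1 p.2 ->
    box_fip (next p) (p.2 / 2) /\ forall k, p.1 k <= next p k <= p.1 k + p.2 / 2.
  apply: (choice (fun (p : point d * R) lo' => 0 <= p.2 -> box_fip p.1 p.2 ->
    box_fip lo' (p.2 / 2) /\ forall k, p.1 k <= lo' k <= p.1 k + p.2 / 2)) => - [lo w'] /=.
  case: (classic (0 <= w' /\ box_fip lo w')) => [[w'0 fw] | nfw].
    by have [lo' Hlo'] := box_fip_half w'0 fw; exists lo'.
  by exists lo => w'0 fw; case: nfw.
pose lo := fix lo n := if n is m.+1 then next (lo m, W m) else lo0.
have lo_fip n : box_fip (lo n) (W n).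
  elim: n => [|n IH]; last by rewrite WS; case: (Hnext (lo n, W n) (W0 n) IH).
  by have -> : W 0%N = w by rewrite /W /=; field.
have lo_nest n k : lo n k <= lo n.+1 k <= lo n k + W n.+1.
  by rewrite WS; case: (Hnext (lo n, W n) (W0 n) (lo_fip n)) => _; apply.
have [x Hx] : exists x : point d, forall k n, lo n k <= x k <= lo n k + W n.
  apply: (choice (fun k xk => forall n, lo n k <= xk <= lo n k + W n)) => k.
  apply: nested_intervals W0 _ _ => n; have := lo_nest n k; have := WS n; lra.
by exists lo, x => n; split => // k; exact: Hx.
Qed.

Lemma cube_fip M : 0 <= M -> (forall i, seq_closed (f i)) ->
  (forall l : list I, exists x, (forall k, -M <= x k <= M) /\ forall i, In i l -> f i x) ->
  exists x, forall i, f i x.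
Proof.
move=> M0 clf fip.
have [|l | lo [x Hx]] := @box_fip_limit (fun _ => - M) (2 * M); first lra.
  by have [x [xM xl]] := fip l; exists x; split => // k; have := xM k; lra.
exists x => i.
have [y Hy] : exists y : nat -> point d, forall n, in_box (lo n) (2 * M / 2 ^ n) (y n) /\ f i (y n).
  apply: (choice (fun n y => in_box (lo n) (2 * M / 2 ^ n) y /\ f i y)) => n.
  have [y [yb yl]] := (Hx n).1 [:: i].
  by exists y; split => //; apply: yl; left.
apply: (clf i y); first by move=> n; case: (Hy n).
move=> k; apply: (cv_squeeze (w := fun n => 2 * M / 2 ^ n)); last exact: cv_pow_half.
by move=> n; case: (Hy n) => /(_ k) yb _; apply: Rabs_le; have := (Hx n).2 k; lra.
Qed.

End CubeCompactness.

Lemma eq_point_in d (A : point d -> Prop) (x y : point d) :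
  A x -> (forall i, x i = y i) -> A y.
Proof. by move=> Ax xy; have <- : x = y by apply: functional_extensionality. Qed.

Lemma big_Rplus_eq0_weighted (I : Type) (r : seq I) (mu z : I -> R) :
  (forall k, 0 <= mu k) -> \big[Rplus/R0]_(k <- r) mu k = 0 ->
  \big[Rplus/R0]_(k <- r) (mu k * z k) = 0.
Proof.
move=> mu0; elim: r => [|a r IH]; first by rewrite !big_nil.
rewrite !big_cons => S0; have Sr0 := big_Rplus_ge0 r xpredT mu0.
have mua : mu a = 0 by have := mu0 a; lra.
by rewrite mua IH; lra.
Qed.

Lemma convex_comb d (C : point d -> Prop) (I : Type) (r : seq I) (mu : I -> R) (y : I -> point d) :
  is_convex C -> (forall k, 0 <= mu k) -> (forall k, 0 < mu k -> C (y k)) ->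
  0 < \big[Rplus/R0]_(k <- r) mu k ->
  C (fun i => \big[Rplus/R0]_(k <- r) (mu k * y k i) / \big[Rplus/R0]_(k <- r) mu k).
Proof.
move=> convC mu0 Cy; elim: r => [|a r IH]; first by rewrite big_nil; lra.
rewrite big_cons => S0.
pose Sr := \big[Rplus/R0]_(k <- r) mu k.
have Sr0 : 0 <= Sr := big_Rplus_ge0 r xpredT mu0.
case: (Rle_lt_or_eq_dec _ _ Sr0) => [Srpos | Sr_eq0].
- case: (Rle_lt_or_eq_dec _ _ (mu0 a)) => [mua | mua0].
  + pose t := mu a / (mu a + Sr).
    have t01 : 0 <= t <= 1.
      rewrite /t; split; first by apply: Rlt_le; apply: Rdiv_lt_0_compat; lra.
      by apply: (Rmult_le_reg_r (mu a + Sr)); [lra | rewrite /Rdiv Rmult_assoc Rinv_l; lra].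
    apply: (eq_point_in (A := C) (convC _ _ t (Cy a mua) (IH Srpos) t01)) => i.
    by rewrite /vadd /vscale big_cons /t -/Sr; field; lra.
  + apply: (eq_point_in (A := C) (IH Srpos)) => i.
    by rewrite big_cons -mua0 -/Sr Rmult_0_l !Rplus_0_l.
- have mua : 0 < mu a by rewrite -/Sr -Sr_eq0 in S0; lra.
  apply: (eq_point_in (A := C) (Cy a mua)) => i.
  rewrite big_cons (big_Rplus_eq0_weighted (fun k => y k i) mu0 (esym Sr_eq0)) -/Sr -Sr_eq0.
  by field; lra.
Qed.

Section AffineDependence.
Local Open Scope ring_scope.

Lemma affine_dependence d n (x : 'I_n -> point d) : (d.+1 < n)%N ->
  exists lam : 'I_n -> R, (exists k, lam k <> R0) /\
    \big[Rplus/R0]_k lam k = R0 /\ forall i, \big[Rplus/R0]_k Rmult (lam k) (x k i) = R0.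
Proof.
move=> dn.
(* The rows of [Mx] are the points [x k] extended by a last coordinate [1]. *)
pose Mx : 'M[R]_(n, d.+1) :=
  \matrix_(k, j) if unlift ord_max j is Some j' then x k j' else 1.
have not_free : ~~ row_free Mx.
  by rewrite -row_leq_rank -ltnNge (leq_ltn_trans (rank_leq_col Mx) dn).
have [u uMx u_neq0] : exists2 u : 'rV[R]_n, u *m Mx = 0 & u != 0.
  apply: NNPP => none; move/negP: not_free; apply; apply: inj_row_free => v vMx.
  by apply: NNPP => v_neq0; apply: none; exists v => //; apply/eqP.
have col_eq0 j : \sum_k u 0 k * Mx k j = 0.
  by move/matrixP: uMx => /(_ 0 j); rewrite !mxE.
exists (fun k => u 0 k); split; last split.
- apply: NNPP => all0; move/negP: u_neq0; apply; apply/eqP/rowP => k.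
  by rewrite mxE; apply: NNPP => uk; apply: all0; exists k.
- have := col_eq0 ord_max; rewrite (eq_bigr (fun k => u 0 k)) // => k _.
  by rewrite mxE unlift_none GRing.mulr1.
- move=> i; have := col_eq0 (lift ord_max i); rewrite (eq_bigr (fun k => u 0 k * x k i)) // => k _.
  by rewrite mxE liftK.
Qed.

End AffineDependence.

Lemma big_Rplus_sub (I : Type) (r : seq I) (F G : I -> R) :
  \big[Rplus/R0]_(k <- r) (F k - G k) =
  \big[Rplus/R0]_(k <- r) F k - \big[Rplus/R0]_(k <- r) G k.
Proof. by elim: r => [|a r IH]; rewrite ?big_nil ?big_cons ?IH; ring. Qed.

Lemma Rmax_split a : a = Rmax a 0 - Rmax (- a) 0.
Proof. by rewrite /Rmax; do 2 case: Rle_dec; lra. Qed.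

(* [p] lies in conv {x k | P k} and in conv {x k | ~ P k}, stated through the convex sets
   containing either part. *)
Lemma radon d n (x : 'I_n -> point d) : (d.+1 < n)%N ->
  exists (P : 'I_n -> Prop) (p : point d), forall C, is_convex C ->
    (forall k, P k -> C (x k)) \/ (forall k, ~ P k -> C (x k)) -> C p.
Proof.
move=> dn; have [lam [[k0 lam_k0] [sum0 wsum0]]] := affine_dependence x dn.
wlog lam_pos : lam lam_k0 sum0 wsum0 / 0 < lam k0.
  move=> base; case: (Rle_lt_dec (lam k0) 0) => [lam_neg | ]; last exact: base.
  apply: (base (fun k => -1 * lam k)); first lra.
  - by rewrite -big_distrr /= sum0; ring.
  - move=> i; apply: eq_trans (_ : _ = -1 * \big[Rplus/R0]_k (lam k * x k i)) _.
      by rewrite big_distrr /=; apply: eq_bigr => k _; ring.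
    by rewrite wsum0; ring.
  - lra.
pose pos k := Rmax (lam k) 0; pose neg k := Rmax (- lam k) 0.
have pos0 k : 0 <= pos k by apply: Rmax_r.
have neg0 k : 0 <= neg k by apply: Rmax_r.
have lamE k : lam k = pos k - neg k by apply: Rmax_split.
have sum_eq : \big[Rplus/R0]_k pos k = \big[Rplus/R0]_k neg k.
  suff : \big[Rplus/R0]_k pos k - \big[Rplus/R0]_k neg k = 0 by lra.
  by rewrite -big_Rplus_sub -(eq_bigr _ (fun k _ => lamE k)) sum0.
have wsum_eq i : \big[Rplus/R0]_k (pos k * x k i) = \big[Rplus/R0]_k (neg k * x k i).
  suff : \big[Rplus/R0]_k (pos k * x k i) - \big[Rplus/R0]_k (neg k * x k i) = 0 by lra.
  have wlamE k : lam k * x k i = pos k * x k i - neg k * x k i by rewrite lamE; ring.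
  by rewrite -big_Rplus_sub -(eq_bigr _ (fun k _ => wlamE k)) wsum0.
have sum_pos : 0 < \big[Rplus/R0]_k pos k.
  apply: Rlt_le_trans (big_Rplus_ge_term k0 pos0); rewrite /pos /Rmax; case: Rle_dec; lra.
exists (fun k => 0 < lam k), (fun i => \big[Rplus/R0]_k (pos k * x k i) / \big[Rplus/R0]_k pos k).
move=> C convC [CP | CnP].
- apply: convex_comb => // k; rewrite /pos /Rmax => posk; apply: CP.
  by move: posk; case: Rle_dec; lra.
- have negC k : 0 < neg k -> C (x k).
    by move=> negk; apply: CnP; move: negk; rewrite /neg /Rmax; case: Rle_dec; lra.
  have neg_pos : 0 < \big[Rplus/R0]_k neg k by rewrite -sum_eq.
  apply: (eq_point_in (A := C) (convex_comb convC neg0 negC neg_pos)) => i.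
  by rewrite sum_eq wsum_eq.
Qed.

Lemma helly d n (B : 'I_n -> point d -> Prop) : (forall k, is_convex (B k)) ->
  (forall S : {set 'I_n}, (#|S| <= d.+1)%N -> exists x, forall k, k \in S -> B k x) ->
  exists x, forall k, B k x.
Proof.
elim: n B => [|n IH] B convB smallS.
  by exists (fun _ => 0) => - [].
case: (leqP n.+1 d.+1) => [small | big].
  have [|x Hx] := smallS setT; first by rewrite cardsT card_ord.
  by exists x => k; apply: Hx; rewrite in_setT.
have [X HX] : exists X : 'I_n.+1 -> point d, forall k j, j != k -> B j (X k).
  apply: (choice (fun k y => forall j, j != k -> B j y)) => k.
  have [S cardS | y Hy] := IH (fun j => B (lift k j)) (fun j => convB _).
    have [|y Hy] := smallS (lift k @: S); first by rewrite card_imset //; exact: lift_inj.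
    by exists y => j jS; apply: Hy; apply: imset_f.
  by exists y => j; case: (unliftP k j) => [j' -> _ | ->]; [exact: Hy | rewrite eqxx].
have [P [p Hp]] := radon X big.
exists p => j; apply: Hp (convB j) _.
(* A Radon point lies in [B j]: one of the two parts avoids the index [j]. *)
by case: (classic (P j)) => Pj; [right | left] => k Pk; apply: HX; apply/eqP => ekj; subst k.
Qed.

Lemma length_size (T : Type) (s : seq T) : length s = size s.
Proof. by elim: s => [|a s IH] //=; rewrite IH. Qed.

Lemma NoDup_sublist (T : Type) (P : T -> Prop) (l : list T) :
  exists l', NoDup l' /\ forall x, In x l' <-> In x l /\ P x.
Proof.
elim: l => [|a l [l' [nd l'E]]].
  by exists nil; split; [constructor | move=> x; split => [[] | [[] _]]].
case: (classic (P a /\ ~ In a l')) => [[Pa a_l'] | keep].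
  exists (a :: l'); split; first by constructor.
  move=> x; split => [[<- | /l'E [xl Px]] | [[<- | xl] Px]].
  - by split => //; left.
  - by split => //; right.
  - by left.
  - by right; apply/l'E.
exists l'; split => // x; split => [/l'E [xl Px] | [[<- | xl] Px]].
- by split => //; right.
- by apply: NNPP => a_l'; apply: keep.
- by apply/l'E.
Qed.

Lemma infinite_family_extend d (F : setfamily d) l k :
  infinite_family F -> NoDup l -> (forall A, In A l -> F A) -> (length l <= k)%coq_nat ->
  exists l', NoDup l' /\ (forall A, In A l' -> F A) /\ length l' = k /\ incl l l'.
Proof.
move=> infF + + lk; have [m ->] : exists m, k = (m + length l)%coq_nat.
  by exists (k - length l)%coq_nat; lia.
elim: m l {lk} => [|m IH] l ndl Fl; first by exists l; do !split => //; exact: incl_refl.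
have [A [FA A_l]] := infF l.
have [|l' [nd' [F' [len' incl']]]] := IH (A :: l) (NoDup_cons _ A_l ndl).
  by move=> B [<- | /Fl].
exists l'; do !split => //; first by rewrite len' /=; lia.
by move=> B Bl; apply: incl'; right.
Qed.

Definition common_point d (F : setfamily d) (l : list (point d -> Prop)) (x : point d) :=
  forall A, In A l -> F A -> A x.

Lemma kk_property_le d k (F : setfamily d) : infinite_family F -> kk_property k F ->
  forall l, (length l <= k)%coq_nat -> exists x, common_point F l x.
Proof.
move=> infF kkF l lenl.
have [l1 [nd1 l1E]] := NoDup_sublist F l.
have len1 : (length l1 <= k)%coq_nat.
  have : incl l1 l by move=> A /l1E [].
  by move/(NoDup_incl_length nd1); lia.
have F1 A : In A l1 -> F A by move/l1E => [].
have [l2 [nd2 [F2 [len2 incl2]]]] := infinite_family_extend infF nd1 F1 len1.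
have [x Hx] := kkF l2 len2 nd2 F2.
by exists x => A Al FA; apply: Hx; apply: incl2; apply/l1E.
Qed.

Lemma common_point_seq_closed d (F : setfamily d) l :
  (forall A, F A -> seq_closed A) -> seq_closed (common_point F l).
Proof. by move=> clF a x la ax A Al FA; apply: (clF A FA) ax => n; exact: la. Qed.

Lemma common_point_convex d (F : setfamily d) l :
  (forall A, F A -> is_convex A) -> is_convex (common_point F l).
Proof. by move=> convF x y t lx ly t01 A Al FA; apply: (convF A FA) => //; [exact: lx | exact: ly]. Qed.

Lemma common_point_exists d (F : setfamily d) : infinite_family F -> kk_property d.+1 F ->
  (forall A, F A -> is_convex A) -> forall l, exists x, common_point F l x.
Proof.
move=> infF kkF convF l.
pose B (k : 'I_(length l)) x := F (List.nth k l (fun _ => True)) -> List.nth k l (fun _ => True) x.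
have [k x y t Bx By t01 FA | S cardS | x Bx] := @helly d (length l) B.
- exact: (convF _ FA) (Bx FA) (By FA) t01.
- pose lS := List.map (fun k : 'I_(length l) => List.nth k l (fun _ => True)) (enum S).
  have [|x Sx] := @kk_property_le _ _ _ infF kkF lS.
    by rewrite length_map length_size -cardE; apply/leP.
  exists x => k kS; apply: Sx; apply: in_map; apply/InP; rewrite mem_enum.
  exact: kS.
- exists x => A Al; have [n [nl <-]] := In_nth l A (fun _ => True) Al.
  have nl' : (n < length l)%N by apply/ltP.
  exact: (Bx (Ordinal nl')).
Qed.

Definition unbounded d (A : point d -> Prop) :=
  forall M, exists x, A x /\ exists k, M < Rabs (x k).

Lemma common_point_unbounded d (F : setfamily d) : (forall A, F A -> seq_closed A) ->
  (forall l, exists x, common_point F l x) -> ~ (exists x, forall A, F A -> A x) ->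
  forall l, unbounded (common_point F l).
Proof.
move=> clF fip nomeet l M; apply: NNPP => bounded.
have Mb x k : common_point F l x -> Rabs (x k) <= M.
  by move=> lx; apply: Rnot_lt_le => Mx; apply: bounded; exists x; split => //; exists k.
(* Otherwise the sets [common_point F (A :: l)] have the finite intersection property
   inside a cube. *)
apply: nomeet; have [A | l' | x Hx] := @cube_fip _ _ (fun A => common_point F (A :: l)) (Rabs M) (Rabs_pos M).
- exact: common_point_seq_closed.
- have [x lx] := fip (l' ++ l); exists x; split.
    move=> k; have lx' : common_point F l x by move=> A Al; apply: lx; apply: in_or_app; right.
    have := Mb x k lx'; have := Rle_abs (x k); have := Rle_abs (- x k); rewrite Rabs_Ropp.
    by have := Rle_abs M; lra.
  by move=> A Al' B [<- | Bl]; apply: lx; apply: in_or_app; [left | right].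
- by exists x => A FA; apply: (Hx A A); [left |].
Qed.

Definition recession_direction d (A : point d -> Prop) (v : point d) :=
  forall a, A a -> forall t, 0 <= t -> A (vadd a (vscale t v)).

Lemma recession_direction_seq_closed d (A : point d -> Prop) :
  seq_closed A -> seq_closed (recession_direction A).
Proof.
move=> clA u v recu uv a Aa t t0.
by apply: (seq_closed_affine_preim clA _ uv) => n; exact: recu.
Qed.

(* [a + t v] is the limit, as [m] grows, of the point at parameter [t / m] of the segment
   from [a] to [p + m v]. *)
Lemma ray_recession d (A : point d -> Prop) p v : seq_closed A -> is_convex A ->
  (forall n : nat, A (vadd p (vscale (INR n) v))) -> recession_direction A v.
Proof.
move=> clA convA ray a Aa t t0.
have [N tN] := INR_archimed 1 t Rlt_0_1.
pose m n := INR (n + N).+1.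
have m_ge n : INR n + 1 <= m n /\ t <= m n.
  by rewrite /m S_INR plus_INR; have := pos_INR n; have := pos_INR N; lra.
pose lam n := t / m n.
have lam01 n : 0 <= lam n <= 1.
  have [m1 mt] := m_ge n; have n0 := pos_INR n; rewrite /lam; split.
    by apply: Rmult_le_pos => //; apply: Rlt_le; apply: Rinv_0_lt_compat; lra.
  by apply: (Rmult_le_reg_r (m n)); [lra | rewrite /Rdiv Rmult_assoc Rinv_l; lra].
apply: (clA (fun n => vadd (vscale (lam n) (vadd p (vscale (m n) v))) (vscale (1 - lam n) a))).
  by move=> n; apply: convA => //; exact: ray.
move=> i; apply: (cv_squeeze (w := fun n => t * Rabs (p i - a i) * / (INR n + 1))); last first.
  by rewrite -(Rmult_0_r (t * Rabs (p i - a i))); exact: cv_scal cv_inv_succ.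
move=> n; have [m1 mt] := m_ge n; have := pos_INR n => n0.
have -> : vadd (vscale (lam n) (vadd p (vscale (m n) v))) (vscale (1 - lam n) a) i
    - vadd a (vscale t v) i = lam n * (p i - a i).
  by rewrite /vadd /vscale /lam; field; lra.
rewrite Rabs_mult Rabs_right; last by have := lam01 n; lra.
have inv_le : / m n <= / (INR n + 1) by apply: Rinv_le_contravar; lra.
have := Rmult_le_compat_l (t * Rabs (p i - a i)) _ _ (Rmult_le_pos _ _ t0 (Rabs_pos _)) inv_le.
by rewrite /lam /Rdiv; nra.
Qed.

Lemma sqnorm_unit_dir d (x p : point d) : 0 < Defs.dist x p ->
  sqnorm (fun i => (x i - p i) / Defs.dist x p) = 1.
Proof.
set r := Defs.dist x p => r0.
have rr : r * r = \big[Rplus/R0]_i ((x i - p i) * (x i - p i)).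
  by rewrite /r /Defs.dist sqrt_sqrt //; exact: (sqnorm_ge0 (fun i => x i - p i)).
rewrite /sqnorm (eq_bigr (fun i => / (r * r) * ((x i - p i) * (x i - p i)))) => [|i _].
  by rewrite -big_distrr /= -rr; field; lra.
by field; lra.
Qed.

Lemma unbounded_ray d (A : point d -> Prop) p : seq_closed A -> is_convex A -> A p ->
  unbounded A -> exists u, sqnorm u = 1 /\ forall n : nat, A (vadd p (vscale (INR n) u)).
Proof.
move=> clA convA Ap unbA.
pose f n u := sqnorm u = 1 /\ A (vadd p (vscale (INR n) u)).
have [n | l | u Hu] := @cube_fip _ _ f 1 Rle_0_1.
- exact: seq_closedI (@sphere_seq_closed d) (seq_closed_affine_preim (p := p) (c := INR n) clA).
- pose N := (\max_(n <- l) n)%N.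
  pose Sp := \big[Rplus/R0]_k Rabs (p k).
  have [x [Ax [k xk]]] := unbA (INR N + 1 + Sp).
  pose r := Defs.dist x p.
  have far : INR N + 1 < r.
    have := coord_le_dist x p k; have := Rabs_triang_inv (x k) (p k).
    by have := big_Rplus_ge_term k (fun i => Rabs_pos (p i)); rewrite -/r -/Sp; lra.
  have r0 : 0 < r by have := pos_INR N; lra.
  have u1 := sqnorm_unit_dir r0.
  exists (fun i => (x i - p i) / r); split => [k' | n nl]; first exact: unit_coord_bound u1.
  split => //.
  have nN : INR n <= INR N.
    by apply/le_INR/leP; apply: (@leq_bigmax_seq _ l xpredT (fun i => i) n) => //; exact/InP.
  have n0 := pos_INR n; apply: (eq_point_in (A := A) (convA x p (INR n / r) Ax Ap _)) => [|i].
    by split; [apply: Rmult_le_pos; [| apply: Rlt_le; apply: Rinv_0_lt_compat] |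
               apply: (Rmult_le_reg_r r); [| rewrite /Rdiv Rmult_assoc Rinv_l]]; lra.
  by rewrite /vadd /vscale; field; lra.
- exists u; split; first exact: (proj1 (Hu 0%N)).
  by move=> n; exact: (proj2 (Hu n)).
Qed.

Lemma finite_subfamily_recession d (F : setfamily d) :
  (forall A, F A -> seq_closed A /\ is_convex A) ->
  (forall l, exists x, common_point F l x) -> ~ (exists x, forall A, F A -> A x) ->
  forall l, exists u, sqnorm u = 1 /\ forall A, In A l -> F A -> recession_direction A u.
Proof.
move=> ccF fip nomeet l.
have clF A : F A -> seq_closed A by case/ccF.
have convF A : F A -> is_convex A by case/ccF.
have [p lp] := fip l.
have [u [u1 ray]] := unbounded_ray (common_point_seq_closed (l := l) clF) (common_point_convex (l := l) convF)
  lp (common_point_unbounded clF fip nomeet l).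
exists u; split => // A Al FA.
by apply: (ray_recession (p := p)) (clF A FA) (convF A FA) _ => n; exact: ray n A Al FA.
Qed.

Theorem lemma5p1 (d : nat) (F : setfamily d) :
  infinite_family F ->
  (forall A, F A -> is_closed A /\ is_convex A) ->
  kk_property d.+1 F ->
  ~ (exists x : point d, forall A, F A -> A x) ->
  exists v : point d, sqnorm v = R1 /\
    forall A, F A -> forall a, A a -> forall t : R, Rle 0 t ->
      A (vadd a (vscale t v)).
Proof.
move=> infF ccF kkF nomeet.
have scF A : F A -> seq_closed A /\ is_convex A.
  by case/ccF => clA convA; split => //; exact: is_closed_seq_closed.
have fip := common_point_exists infF kkF (fun A FA => proj2 (ccF A FA)).
pose f A u := sqnorm u = 1 /\ (F A -> recession_direction A u).
have [A | l | u Hu] := @cube_fip _ _ f 1 Rle_0_1.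
- apply: seq_closedI (@sphere_seq_closed d) (seq_closed_if _) => FA.
  exact: recession_direction_seq_closed (proj1 (scF A FA)).
- have [u [u1 rec]] := finite_subfamily_recession scF fip nomeet l.
  by exists u; split => [k | A Al]; [exact: unit_coord_bound | split => // FA; exact: rec].
- exists u; split; first exact: (proj1 (Hu (fun _ => True))).
  by move=> A FA; exact: (proj2 (Hu A)).
Qed.
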